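(* Let $\Gamma^J=SL_2(\mathbb Z)\ltimes\mathbb Z^2$ be the full Jacobi group (pairs $(M,X)$, $M\in SL_2(\mathbb Z)$, $X\in\mathbb Z^2$ a row vector, with $(M,X)(M',X')=(MM',XM'+X')$), and consider the split extension $0\to\mathbb Z^2\xrightarrow{i}\Gamma^J\xrightarrow{\rho}SL_2(\mathbb Z)\to0$ with $i(X)=(I,X)$, $\rho(M,X)=M$. Then, with trivial integer coefficients, the induced sequence $$0\to H^2(SL_2(\mathbb Z))\xrightarrow{\rho^*}H^2(\Gamma^J)\xrightarrow{i^*}H^2(\mathbb Z^2)\to0$$ is exact and splits. *)

(* Group cohomology H^2(G; Z) with trivial integer coefficients,
   via inhomogeneous (standard) 2-cochains f : G -> G -> int. *)
From HB Require Import structures.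
From mathcomp Require Import all_boot all_order all_algebra.
Set Implicit Arguments. Unset Strict Implicit. Unset Printing Implicit Defensive.
Import Order.TTheory GRing.Theory Num.Theory.
Local Open Scope ring_scope.

Section Cochains.
Variable G : Type.
Variable mul : G -> G -> G.

Definition cocycle2 (f : G -> G -> int) : Prop :=
  forall g h k, f h k - f (mul g h) k + f g (mul h k) - f g h = 0.

Definition coboundary2 (f : G -> G -> int) : Prop :=
  exists c : G -> int, forall g h, f g h = c h - c (mul g h) + c g.
End Cochains.

Definition pull (H G : Type) (phi : H -> G) (f : G -> G -> int) : H -> H -> int :=
  fun x y => f (phi x) (phi y).

Definition cadd (G : Type) (f g : G -> G -> int) : G -> G -> int :=
  fun x y => f x y + g x y.
Definition csub (G : Type) (f g : G -> G -> int) : G -> G -> int :=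
  fun x y => f x y - g x y.

Definition SL2 := {M : 'M[int]_2 | \det M == 1}.

Lemma SL2_mul_proof (A B : SL2) : \det (sval A *m sval B) == 1.
Proof. by rewrite det_mulmx (eqP (svalP A)) (eqP (svalP B)) mulr1. Qed.

Definition SL2mul (A B : SL2) : SL2 := exist (fun M : 'M[int]_2 => \det M == 1) _ (SL2_mul_proof A B).

Lemma SL2_one_proof : \det (1%:M : 'M[int]_2) == 1.
Proof. by rewrite det1. Qed.

Definition SL2one : SL2 := exist (fun M : 'M[int]_2 => \det M == 1) _ SL2_one_proof.

Definition Z2 := 'rV[int]_2.
Definition Z2add (X Y : Z2) : Z2 := X + Y.

Definition Jac := (SL2 * Z2)%type.
Definition Jmul (p q : Jac) : Jac := (SL2mul p.1 q.1, p.2 *m sval q.1 + q.2).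

Definition iJ (X : Z2) : Jac := (SL2one, X).
Definition rhoJ (p : Jac) : SL2 := p.1.

From mathcomp Require Import all_boot all_order all_algebra.
From mathcomp Require Import zify ring lra.
Set Implicit Arguments. Unset Strict Implicit. Unset Printing Implicit Defensive.
Import Order.TTheory GRing.Theory Num.Theory.
Local Open Scope ring_scope.

(** The extension splits, so [rho^*] is injective (restrict along the section
   [sJ A = (A, 0)]) and [i^* rho^*] vanishes.

   Exactness in the middle: a cocycle trivial on [Z^2] can be corrected by a
   coboundary and a pullback from [SL_2(Z)] so that it vanishes on [Z^2] and on
   the section.  It is then cohomologous to [(p, q) |-> lam q.1 p.2], where
   [lam] is a 1-cocycle of [SL_2(Z)] with values in [Hom(Z^2, Z)]; every such
   cocycle is principal, and its potential gives the coboundary.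

   Surjectivity and splitting: [H^2(Z^2) = Z] through the skew value
   [f(e1, e2) - f(e2, e1)], since a cocycle whose skew value vanishes is a
   coboundary (integrate a closed discrete 1-form).  The generator
   [beta X Y = X_1 Y_2] extends to the cocycle
   [beta (X M') X' + (Q (X M') - Q X) / 2] of the Jacobi group, where
   [Q (x, y) = (x + 1)(y + 1)]. *)

Definition cscale (G : Type) (n : int) (f : G -> G -> int) : G -> G -> int :=
  fun x y => n * f x y.

Section Cochains.
Variables (G : Type) (mul : G -> G -> G).

Lemma eq_coboundary2 (f g : G -> G -> int) :
  f =2 g -> coboundary2 mul f -> coboundary2 mul g.
Proof. by move=> fg [c hc]; exists c => x y; rewrite -fg. Qed.

Lemma coboundary2_const (a : int) : coboundary2 mul (fun _ _ => a).
Proof. by exists (fun _ => a) => x y; rewrite subrr add0r. Qed.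

Lemma cocycle2_const (a : int) : cocycle2 mul (fun _ _ => a).
Proof. by move=> x y z; rewrite subrr add0r subrr. Qed.

Lemma cocycle2_sub (f g : G -> G -> int) :
  cocycle2 mul f -> cocycle2 mul g -> cocycle2 mul (csub f g).
Proof. by move=> cf cg x y z; have := cf x y z; have := cg x y z; rewrite /csub; lra. Qed.

Lemma cocycle2_scale (n : int) (f : G -> G -> int) :
  cocycle2 mul f -> cocycle2 mul (cscale n f).
Proof.
by move=> cf x y z; rewrite /cscale -!mulrBr -mulrDr -mulrBr cf mulr0.
Qed.

Lemma cocycle2_coboundary (c : G -> int) : associative mul ->
  cocycle2 mul (fun g h => c h - c (mul g h) + c g).
Proof. by move=> mulA x y z; rewrite mulA; lra. Qed.

End Cochains.

Section Pullback.
Variables (H G : Type) (mulH : H -> H -> H) (mulG : G -> G -> G) (phi : H -> G).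
Hypothesis phiM : {morph phi : x y / mulH x y >-> mulG x y}.

Lemma cocycle2_pull (f : G -> G -> int) :
  cocycle2 mulG f -> cocycle2 mulH (pull phi f).
Proof. by move=> cf x y z; rewrite /pull !phiM; exact: cf. Qed.

Lemma coboundary2_pull (f : G -> G -> int) :
  coboundary2 mulG f -> coboundary2 mulH (pull phi f).
Proof. by move=> [c hc]; exists (c \o phi) => x y; rewrite /pull hc /= phiM. Qed.

End Pullback.

Section AbelianCochains.
Variable M : zmodType.

Lemma cocycle2_biadditive (f : M -> M -> int) :
  (forall x, {morph f x : y z / y + z}) -> (forall z, {morph f^~ z : x y / x + y}) ->
  cocycle2 +%R f.
Proof. by move=> fDr fDl x y z; rewrite fDl fDr; lra. Qed.

Lemma cocycle2_coboundary_step (f : M -> M -> int) (c : M -> int) (e : M) :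
  cocycle2 +%R f -> (forall v, c (v + e) = c v - f v e) ->
  forall h, (forall g, f g h = c h - c (g + h) + c g) <->
            (forall g, f g (h + e) = c (h + e) - c (g + (h + e)) + c g).
Proof.
move=> f_cocycle c_e h; split=> fE g; have := f_cocycle g h e;
  have := fE g; have := c_e h; have := c_e (g + h); rewrite -addrA /=; lra.
Qed.

End AbelianCochains.

Lemma det2E (M : 'M[int]_2) : \det M = M 0 0 * M 1 1 - M 0 1 * M 1 0.
Proof.
rewrite (expand_det_row M 0) !big_ord_recr big_ord0 /=.
rewrite /cofactor !det_mx11 !mxE /=.
have -> : (widen_ord (leqnSn 1) ord_max : 'I_2) = 0 by apply/val_inj.
have -> : (ord_max : 'I_2) = 1 by apply/val_inj.
have -> : lift (0 : 'I_2) (0 : 'I_1) = 1 by apply/val_inj.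
have -> : lift (1 : 'I_2) (0 : 'I_1) = 0 by apply/val_inj.
by rewrite add0r expr0 expr1 mul1r mulN1r mulrN.
Qed.

Lemma row2_mulmxE (X : Z2) (M : 'M[int]_2) j :
  (X *m M) 0 j = X 0 0 * M 0 j + X 0 1 * M 1 j.
Proof.
rewrite mxE !big_ord_recr big_ord0 /= add0r.
have -> : (widen_ord (leqnSn 1) ord_max : 'I_2) = 0 by apply/val_inj.
by have -> : (ord_max : 'I_2) = 1 by apply/val_inj.
Qed.

Lemma SL2mul1 : left_id SL2one SL2mul.
Proof. by move=> A; apply/val_inj; rewrite /= mul1mx. Qed.

Lemma SL2mulr1 : right_id SL2one SL2mul.
Proof. by move=> A; apply/val_inj; rewrite /= mulmx1. Qed.

Lemma SL2mulA : associative SL2mul.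
Proof. by move=> A B C; apply/val_inj; rewrite /= mulmxA. Qed.

Lemma JmulA : associative Jmul.
Proof.
move=> [A X] [B Y] [C Z]; rewrite /Jmul /= SL2mulA.
by rewrite mulmxDl mulmxA addrA.
Qed.

Definition sJ (A : SL2) : Jac := (A, 0).

Lemma sJ_morph : {morph sJ : A B / SL2mul A B >-> Jmul A B}.
Proof. by move=> A B; rewrite /Jmul /= mul0mx addr0. Qed.

Lemma iJ_morph : {morph iJ : X Y / Z2add X Y >-> Jmul X Y}.
Proof. by move=> X Y; rewrite /Jmul /= SL2mul1 mulmx1. Qed.

Lemma rhoJ_morph : {morph rhoJ : p q / Jmul p q >-> SL2mul p q}.
Proof. by []. Qed.

Lemma Jmul_sJ_iJ A X : Jmul (sJ A) (iJ X) = (A, X).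
Proof. by rewrite /Jmul /= SL2mulr1 mul0mx add0r. Qed.

Lemma Jmul_iJ_sJ X B : Jmul (iJ X) (sJ B) = (B, X *m sval B).
Proof. by rewrite /Jmul /= SL2mul1 addr0. Qed.

Lemma det_scalar_N1 : \det ((-1)%:M : 'M[int]_2) == 1.
Proof. by rewrite det_scalar expr2 mulrNN mulr1. Qed.

Definition SL2N1 : SL2 := exist (fun M : 'M[int]_2 => \det M == 1) _ det_scalar_N1.

Definition Um : 'M[int]_2 :=
  \matrix_(i, j) (if i == 0 then (if j == 0 then 0 else -1) else 1).

Lemma det_Um : \det Um == 1.
Proof. by rewrite det2E !mxE. Qed.

Definition U : SL2 := exist (fun M : 'M[int]_2 => \det M == 1) _ det_Um.

Lemma Um_sqr : Um *m Um = Um - 1%:M.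
Proof.
apply/matrixP => i j; rewrite !mxE !big_ord_recr big_ord0 /= !mxE.
by case: i => [[|[|i]] Hi] //; case: j => [[|[|j]] Hj].
Qed.

(* [-1] is central and acts by [-1], which makes [2 lam] principal with
   potential [lam SL2N1]; [U] has order 6 ([U^2 = U - 1]), which halves that
   potential. *)
Lemma SL2_crossed_hom_principal (lam : SL2 -> Z2 -> int) :
  (forall B, {morph lam B : X Y / X + Y}) ->
  (forall B C X, lam (SL2mul B C) X = lam B X + lam C (X *m sval B)) ->
  exists2 nu : Z2 -> int, {morph nu : X Y / X + Y} &
    forall B X, lam B X = nu X - nu (X *m sval B).
Proof.
move=> lamD lamM.
have lamN B X : lam B (- X) = - lam B X.
  have := lamD B X (- X); have := lamD B 0 0; rewrite subrr addr0; lra.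
have N1_central A : SL2mul SL2N1 A = SL2mul A SL2N1.
  by apply/val_inj; rewrite /= scalar_mxC.
have mulN1 (X : Z2) : X *m sval SL2N1 = - X.
  by rewrite /= mul_mx_scalar scaleN1r.
have lam2 B X : 2 * lam B X = lam SL2N1 X - lam SL2N1 (X *m sval B).
  have := lamM SL2N1 B X; have := lamM B SL2N1 X.
  by rewrite mulN1 lamN N1_central; lra.
pose nu X := lam U (X *m Um).
have lamN1 X : lam SL2N1 X = 2 * nu X.
  have := lam2 U (X *m Um).
  by rewrite /nu /= -mulmxA Um_sqr mulmxBr mulmx1 lamD lamN; lra.
exists nu => [X Y | B X]; first by rewrite /nu mulmxDl lamD.
by have := lam2 B X; rewrite !lamN1; lra.
Qed.

Section VanishingCocycle.
Variable F : Jac -> Jac -> int.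
Hypotheses (F_cocycle : cocycle2 Jmul F)
  (F_iJ : forall X Y, F (iJ X) (iJ Y) = 0) (F_sJ : forall A B, F (sJ A) (sJ B) = 0).

Let Fsi (p : Jac) : int := F (sJ p.1) (iJ p.2).
Let lam (B : SL2) (X : Z2) : int := F (iJ X) (sJ B) - F (sJ B) (iJ (X *m sval B)).

(* Four cocycle identities along the factorisation [(A, X) = sJ A * iJ X]. *)
Lemma vanishing_cocycleE p q : F p q = lam q.1 p.2 - Fsi q + Fsi (Jmul p q) - Fsi p.
Proof.
case: p q => [A X] [B Y].
have := F_cocycle (sJ A) (iJ X) (B, Y).
have := F_cocycle (sJ A) (sJ B) (iJ (X *m sval B + Y)).
have := F_cocycle (iJ X) (sJ B) (iJ Y).
have := F_cocycle (sJ B) (iJ (X *m sval B)) (iJ Y).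
have XBY : Jmul (iJ X) (B, Y) = (B, X *m sval B + Y) by rewrite /Jmul /= SL2mul1.
rewrite -sJ_morph -iJ_morph /Z2add !Jmul_sJ_iJ Jmul_iJ_sJ XBY F_sJ F_iJ.
by rewrite /Fsi /lam /=; lra.
Qed.

Lemma lam_cocycle p q r :
  lam r.1 q.2 - lam r.1 (Jmul p q).2 + lam (Jmul q r).1 p.2 - lam q.1 p.2 = 0.
Proof.
have := F_cocycle p q r; rewrite !vanishing_cocycleE JmulA.
by lra.
Qed.

Lemma lamD B : {morph lam B : X Y / X + Y}.
Proof.
have lam1 X : lam SL2one X = 0 by rewrite /lam mulmx1 -[sJ SL2one]/(iJ 0) !F_iJ subrr.
move=> X Y; have := lam_cocycle (SL2one, X) (SL2one, Y) (B, 0).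
by rewrite /Jmul /= mulmx1 SL2mul1 lam1; lra.
Qed.

Lemma lamM B C X : lam (SL2mul B C) X = lam B X + lam C (X *m sval B).
Proof.
have lam0 : lam C 0 = 0 by have := lamD C 0 0; rewrite addr0; lra.
have := lam_cocycle (SL2one, X) (B, 0) (C, 0).
by rewrite /Jmul /= addr0 lam0; lra.
Qed.

Lemma vanishing_cocycle_coboundary : coboundary2 Jmul F.
Proof.
have [nu nuD lamE] := SL2_crossed_hom_principal lamD lamM.
exists (fun p => nu p.2 - Fsi p) => -[A X] [B Y].
by rewrite vanishing_cocycleE lamE /= nuD; lra.
Qed.

End VanishingCocycle.

Lemma ker_iJ_sub_im_rhoJ (F : Jac -> Jac -> int) :
  cocycle2 Jmul F -> coboundary2 Z2add (pull iJ F) ->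
  exists f : SL2 -> SL2 -> int, cocycle2 SL2mul f /\
    coboundary2 Jmul (csub F (pull rhoJ f)).
Proof.
move=> F_cocycle [c cE].
(* The shift by [c 0] makes the corrected cocycle [F'] vanish on the section. *)
pose f := csub (pull sJ F) (fun _ _ => c 0).
have f_cocycle : cocycle2 SL2mul f.
  exact: cocycle2_sub (cocycle2_pull sJ_morph F_cocycle) (cocycle2_const _ _).
exists f; split => //.
pose C (p : Jac) := c p.2.
pose F' := csub (csub F (pull rhoJ f)) (fun p q => C q - C (Jmul p q) + C p).
have F'_cocycle : cocycle2 Jmul F'.
  apply: cocycle2_sub (cocycle2_coboundary _ JmulA).
  exact: cocycle2_sub F_cocycle (cocycle2_pull rhoJ_morph f_cocycle).
have c0 : F (iJ 0) (iJ 0) = c 0 by have := cE 0 0; rewrite /pull /Z2add addr0; lra.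
have [D DE] : coboundary2 Jmul F'.
  apply: vanishing_cocycle_coboundary => // [X Y | A B].
    have := cE X Y; rewrite /F' /f /C /csub /pull -iJ_morph /=.
    by rewrite -[sJ SL2one]/(iJ 0) c0 => ->; lra.
  by rewrite /F' /f /C /csub /pull -sJ_morph /=; lra.
exists (fun p => D p + C p) => p q.
by have := DE p q; rewrite /F' /csub; lra.
Qed.

Lemma int_ind_shift (P : int -> Prop) :
  P 0 -> (forall x, P x <-> P (x + 1)) -> forall x, P x.
Proof.
move=> P0 PS; elim/int_ind => [|n Pn|n Pn] //.
  by rewrite -addn1 PoszD; apply: (proj1 (PS _)).
by apply: (proj2 (PS _)); rewrite -addn1 PoszD opprD subrK.
Qed.

(* As [Negz n = - n.+1], the second branch is [- \sum_(x <= i < 0) h i]. *)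
Definition isum (h : int -> int) (x : int) : int :=
  match x with
  | Posz n => \sum_(i < n) h i
  | Negz n => - \sum_(i < n.+1) h (- i.+1%:Z)
  end.

Lemma isum0 h : isum h 0 = 0.
Proof. exact: big_ord0. Qed.

Lemma isumS h x : isum h (x + 1) = isum h x + h x.
Proof.
case: x => [n|[|n]]; rewrite ?NegzE.
- by rewrite -PoszD addn1 /isum big_ord_recr.
- by rewrite addNr /isum /= big_ord1 big_ord0 addNr.
- have -> : - n.+2%:Z + 1 = Negz n by rewrite NegzE; lia.
  by rewrite /isum /= [in RHS]big_ord_recr /= opprD addrNK.
Qed.

Definition z2 (x y : int) : Z2 := \row_(j < 2) (if j == 0 then x else y).
Definition e1 : Z2 := z2 1 0.
Definition e2 : Z2 := z2 0 1.

Lemma z2E (v : Z2) : v = z2 (v 0 0) (v 0 1).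
Proof.
apply/rowP => j; rewrite mxE.
by case: j => [[|[|j]] Hj] //=; rewrite ?ord1; congr (v _ _); apply/val_inj.
Qed.

Lemma z2_0 : z2 0 0 = 0.
Proof. by apply/rowP => j; rewrite !mxE; case: ifP. Qed.

Lemma z2_add_e1 x y : z2 x y + e1 = z2 (x + 1) y.
Proof. by apply/rowP => j; rewrite !mxE; case: ifP; rewrite ?addr0. Qed.

Lemma z2_add_e2 x y : z2 x y + e2 = z2 x (y + 1).
Proof. by apply/rowP => j; rewrite !mxE; case: ifP; rewrite ?addr0. Qed.

Lemma Z2_ind (P : Z2 -> Prop) : P 0 ->
  (forall v, P v <-> P (v + e1)) -> (forall v, P v <-> P (v + e2)) ->
  forall v, P v.
Proof.
move=> P0 P1 P2 v; rewrite [v]z2E; move: (v 0 0) (v 0 1).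
apply: int_ind_shift => [|x].
  by apply: int_ind_shift => [|y]; rewrite ?z2_0 // -z2_add_e2.
split=> Px y; first by rewrite -z2_add_e1; apply: (proj1 (P1 _)).
by apply: (proj2 (P1 _)); rewrite z2_add_e1.
Qed.

Lemma Z2_closed_form_exact (w1 w2 : Z2 -> int) :
  (forall v, w1 v + w2 (v + e1) = w2 v + w1 (v + e2)) ->
  exists c : Z2 -> int, [/\ c 0 = 0,
    forall v, c (v + e1) = c v + w1 v & forall v, c (v + e2) = c v + w2 v].
Proof.
move=> w_closed.
pose c (v : Z2) := isum (fun x => w1 (z2 x 0)) (v 0 0) + isum (w2 \o z2 (v 0 0)) (v 0 1).
have cE x y : c (z2 x y) = isum (fun x => w1 (z2 x 0)) x + isum (w2 \o z2 x) y.
  by rewrite /c !mxE.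
have c_e2 v : c (v + e2) = c v + w2 v.
  by rewrite [v]z2E z2_add_e2 !cE isumS /= addrA.
exists c; split => // [|v]; first by rewrite -z2_0 cE !isum0 addr0.
rewrite [v]z2E; move: (v 0 0) (v 0 1) => x; apply: int_ind_shift => [|y].
  by rewrite z2_add_e1 !cE !isum0 !addr0 isumS.
rewrite -!z2_add_e2 [z2 x y + e2 + e1]addrAC !c_e2.
by have := w_closed (z2 x y); split; lra.
Qed.

Lemma Z2_symmetric_cocycle_coboundary (f : Z2 -> Z2 -> int) :
  cocycle2 Z2add f -> f e1 e2 = f e2 e1 -> coboundary2 Z2add f.
Proof.
move=> f_cocycle f_sym.
have f_closed v : - f v e1 + - f (v + e1) e2 = - f v e2 + - f (v + e2) e1.
  have := f_cocycle v e1 e2; have := f_cocycle v e2 e1.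
  by rewrite /Z2add f_sym [e2 + e1]addrC; lra.
have [c [c0 c_e1 c_e2]] := Z2_closed_form_exact f_closed.
have f_0 g : f g 0 = f 0 0 by have := f_cocycle g 0 0; rewrite /Z2add !addr0; lra.
exists (fun v => c v + f 0 0) => g h; elim/Z2_ind: h g => [g | h | h].
- by rewrite f_0 /Z2add addr0 c0; lra.
- by apply: cocycle2_coboundary_step => // v; rewrite c_e1; lra.
- by apply: cocycle2_coboundary_step => // v; rewrite c_e2; lra.
Qed.

Definition beta (X Y : Z2) : int := X 0 0 * Y 0 1.

Definition skew (f : Z2 -> Z2 -> int) : int := f e1 e2 - f e2 e1.

Lemma beta_cocycle : cocycle2 Z2add beta.
Proof. by apply: cocycle2_biadditive => X Y Z; rewrite /beta !mxE ?mulrDl ?mulrDr. Qed.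

Lemma skew_coboundary (f : Z2 -> Z2 -> int) : coboundary2 Z2add f -> skew f = 0.
Proof. by move=> [c cE]; rewrite /skew !cE /Z2add [e2 + e1]addrC; lra. Qed.

Lemma Z2_cocycle_cohomologous_beta (f : Z2 -> Z2 -> int) :
  cocycle2 Z2add f -> coboundary2 Z2add (csub (cscale (skew f) beta) f).
Proof.
move=> f_cocycle; set g := csub f (cscale (skew f) beta).
have g_cocycle : cocycle2 Z2add g.
  exact: cocycle2_sub f_cocycle (cocycle2_scale _ beta_cocycle).
have g_sym : g e1 e2 = g e2 e1.
  by rewrite /g /csub /cscale /beta !mxE /= mulr1 mulr0 /skew; lra.
have [c cE] := Z2_symmetric_cocycle_coboundary g_cocycle g_sym.
by exists (fun v => - c v) => X Y; have := cE X Y; rewrite /g /csub /cscale; lra.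
Qed.

Definition even_z2 (v : Z2) : bool := (v 0 0 \in dvdz 2) && (v 0 1 \in dvdz 2).

Lemma even_z2_mulmx (X : Z2) (M : 'M[int]_2) : even_z2 X -> even_z2 (X *m M).
Proof. by case/andP => X0 X1; rewrite /even_z2 !row2_mulmxE !rpredD ?dvdz_mulr. Qed.

Lemma even_z2_SL2 (B : SL2) (X : Z2) : even_z2 (X *m sval B) = even_z2 X.
Proof.
apply/idP/idP; last exact: even_z2_mulmx.
move/(even_z2_mulmx (\adj (sval B))).
by rewrite -mulmxA mul_mx_adj (eqP (svalP B)) mulmx1.
Qed.

Definition quad (v : Z2) : int := (v 0 0 + 1) * (v 0 1 + 1).

Lemma dvdz_quad (v : Z2) : (2 %| quad v)%Z = ~~ even_z2 v.
Proof. by rewrite /quad /even_z2; nia. Qed.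

Lemma quad_polar (u v : Z2) : quad (u + v) - quad u - quad v = beta u v + beta v u - 1.
Proof. by rewrite /quad /beta !mxE; ring. Qed.

Lemma beta_skew_SL2 (C : SL2) (u v : Z2) :
  beta (u *m sval C) (v *m sval C) - beta (v *m sval C) (u *m sval C) =
  beta u v - beta v u.
Proof.
transitivity ((beta u v - beta v u) * \det (sval C)).
  by rewrite /beta !row2_mulmxE det2E; ring.
by rewrite (eqP (svalP C)) mulr1.
Qed.

(* [quad] refines [beta + beta^T] and is [SL_2(Z)]-invariant mod 2 (it is odd
   exactly on even vectors), so its variation along the action can be halved. *)
Definition half_dquad (B : SL2) (X : Z2) : int := ((quad (X *m sval B) - quad X) %/ 2)%Z.

Lemma half_dquadK (B : SL2) (X : Z2) : half_dquad B X * 2 = quad (X *m sval B) - quad X.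
Proof.
apply: divzK.
have : (2 %| quad (X *m sval B))%Z = (2 %| quad X)%Z by rewrite !dvdz_quad even_z2_SL2.
by lia.
Qed.

Lemma half_dquadM (B C : SL2) (X : Z2) :
  half_dquad (SL2mul B C) X = half_dquad B X + half_dquad C (X *m sval B).
Proof.
have := half_dquadK (SL2mul B C) X; have := half_dquadK B X.
have := half_dquadK C (X *m sval B); rewrite /= mulmxA; lra.
Qed.

Lemma half_dquad_polar (C : SL2) (u v : Z2) :
  half_dquad C (u + v) - half_dquad C u - half_dquad C v =
  beta (u *m sval C) (v *m sval C) - beta u v.
Proof.
have := half_dquadK C (u + v); have := half_dquadK C u; have := half_dquadK C v.
have := quad_polar (u *m sval C) (v *m sval C); have := quad_polar u v.
rewrite mulmxDl; have := beta_skew_SL2 C u v; lra.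
Qed.

Definition betaJ (p q : Jac) : int := beta (p.2 *m sval q.1) q.2 + half_dquad q.1 p.2.

Lemma betaJ_iJ (X Y : Z2) : betaJ (iJ X) (iJ Y) = beta X Y.
Proof. by rewrite /betaJ /half_dquad /= !mulmx1 subrr div0z addr0. Qed.

Lemma betaJ_cocycle : cocycle2 Jmul betaJ.
Proof.
move=> [A X] [B Y] [C Z]; rewrite /betaJ /Jmul /= half_dquadM mulmxA.
have := half_dquad_polar C (X *m sval B) Y.
by rewrite /beta mulmxDl !mxE; lra.
Qed.

Theorem theorem5 :
  (* rho^* injective *)
  (forall f : SL2 -> SL2 -> int, cocycle2 SL2mul f ->
     coboundary2 Jmul (pull rhoJ f) -> coboundary2 SL2mul f) /\
  (* i^* o rho^* = 0 *)
  (forall f : SL2 -> SL2 -> int, cocycle2 SL2mul f ->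
     coboundary2 Z2add (pull iJ (pull rhoJ f))) /\
  (* ker i^* is contained in im rho^* *)
  (forall F : Jac -> Jac -> int, cocycle2 Jmul F ->
     coboundary2 Z2add (pull iJ F) ->
     exists f : SL2 -> SL2 -> int, cocycle2 SL2mul f /\
       coboundary2 Jmul (csub F (pull rhoJ f))) /\
  (* i^* surjective *)
  (forall f : Z2 -> Z2 -> int, cocycle2 Z2add f ->
     exists F : Jac -> Jac -> int, cocycle2 Jmul F /\
       coboundary2 Z2add (csub (pull iJ F) f)) /\
  (* splitting: a group homomorphism s : H^2(Z^2) -> H^2(Gamma^J) with i^* o s = id *)
  (exists s : (Z2 -> Z2 -> int) -> (Jac -> Jac -> int),
     (forall f, cocycle2 Z2add f -> cocycle2 Jmul (s f)) /\
     (forall f g, cocycle2 Z2add f -> cocycle2 Z2add g ->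
        coboundary2 Z2add (csub f g) -> coboundary2 Jmul (csub (s f) (s g))) /\
     (forall f g, cocycle2 Z2add f -> cocycle2 Z2add g ->
        coboundary2 Jmul (csub (s (cadd f g)) (cadd (s f) (s g)))) /\
     (forall f, cocycle2 Z2add f -> coboundary2 Z2add (csub (pull iJ (s f)) f))).
Proof.
pose s f := cscale (skew f) betaJ.
have s_cocycle f : cocycle2 Jmul (s f) by exact: cocycle2_scale betaJ_cocycle.
have iJ_s f : cocycle2 Z2add f -> coboundary2 Z2add (csub (pull iJ (s f)) f).
  move/Z2_cocycle_cohomologous_beta; apply: eq_coboundary2 => X Y.
  by rewrite /csub /pull /s /cscale betaJ_iJ.
split; first by move=> f _; exact: (coboundary2_pull sJ_morph).
split; first by move=> f _; exact: (coboundary2_const _ (f SL2one SL2one)).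
split; first exact: ker_iJ_sub_im_rhoJ.
split; first by move=> f /iJ_s iJ_sf; exists (s f).
exists s; split; first by move=> f _.
split.
  move=> f g _ _ /skew_coboundary skew_fg.
  rewrite /s (_ : skew f = skew g); last by move: skew_fg; rewrite /skew /csub; lra.
  by apply: eq_coboundary2 (coboundary2_const _ 0) => p q; rewrite /csub subrr.
split; last exact: iJ_s.
move=> f g _ _; apply: eq_coboundary2 (coboundary2_const _ 0) => p q.
by rewrite /csub /cadd /s /cscale /skew; ring.
Qed.
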